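(* Let $0.5<p\le 1$, $q=1-p$ and $1-1/p\le\rho\le 0$, and set $s=\sqrt{-\rho pq}$. For a group of two contributors $u_a,u_b$, let $R_a\in\{1,-1\}$ be uniformly random and $R_b=-R_a$. Let $C_a,C_b$ be independent of each other and of $R_a$, each with distribution $\Pr[C=1.5]=p-s$, $\Pr[C=0.5]=s$, $\Pr[C=-0.5]=s$, $\Pr[C=-1.5]=q-s$. For $j\in\{a,b\}$ let $T_j=1$ if $C_j+R_j>0$ and $T_j=0$ if $C_j+R_j<0$. Then the joint distribution of $(T_a,T_b)$ is $\Pr[T_a=1,T_b=1]=p^2+\rho pq$, $\Pr[T_a=1,T_b=0]=\Pr[T_a=0,T_b=1]=(1-\rho)pq$, $\Pr[T_a=0,T_b=0]=q^2+\rho pq$.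
   Context: This describes the non-colluding-server instantiation of Joint Randomized Response: the server generates $R_a,R_b$ for each group, and each contributor generates $C_j$ locally; $T_j$ indicates whether contributor $u_j$ reports truthfully. *)

From HB Require Import structures.
From mathcomp Require Import all_boot all_order all_algebra.
Set Implicit Arguments. Unset Strict Implicit. Unset Printing Implicit Defensive.
Import Order.TTheory GRing.Theory Num.Theory.
Local Open Scope ring_scope.

(* Sample space: (sign of R_a, index of C_a, index of C_b).
   sign true means R_a = 1, false means R_a = -1; R_b = - R_a. *)
Definition Omega := (bool * 'I_4 * 'I_4)%type.

Section JRR.
Variable R : rcfType.

Definition Cval (i : 'I_4) : R :=
  match val i with
  | 0%N => 3 / 2
  | 1%N => 1 / 2
  | 2%N => - (1 / 2)
  | _ => - (3 / 2)
  end.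

Definition Cprob (p s : R) (i : 'I_4) : R :=
  match val i with
  | 0%N => p - s
  | 1%N => s
  | 2%N => s
  | _ => (1 - p) - s
  end.

Definition Ra (w : Omega) : R := if w.1.1 then 1 else -1.
Definition Rb (w : Omega) : R := - Ra w.
Definition Ca (w : Omega) : R := Cval w.1.2.
Definition Cb (w : Omega) : R := Cval w.2.

Definition mass (p s : R) (w : Omega) : R :=
  (1 / 2) * Cprob p s w.1.2 * Cprob p s w.2.

Definition Prob (p s : R) (E : pred Omega) : R :=
  \sum_(w : Omega | E w) mass p s w.

(* T_j = 1 iff C_j + R_j > 0 (C_j + R_j is never 0) *)
Definition Ta (w : Omega) : bool := 0 < Ca w + Ra w.
Definition Tb (w : Omega) : bool := 0 < Cb w + Rb w.

End JRR.
Arguments Ta {R} w.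
Arguments Tb {R} w.
Arguments Ra {R} w.
Arguments Rb {R} w.
Arguments Ca {R} w.
Arguments Cb {R} w.

From HB Require Import structures.
From mathcomp Require Import all_boot all_order all_algebra.
From mathcomp Require Import ring lra.
Set Implicit Arguments. Unset Strict Implicit. Unset Printing Implicit Defensive.
Import Order.TTheory GRing.Theory Num.Theory.
Local Open Scope ring_scope.

(* Given R_a, the indicators T_a and T_b are independent.  When R_j = 1 the
   contributor is truthful unless C_j = -1.5, i.e. with probability p + s; when
   R_j = -1 only C_j = 1.5 makes it truthful, with probability p - s.  Since
   R_b = -R_a, averaging over R_a gives
   Pr[T_a = 1, T_b = 1] = (p + s)(p - s) = p^2 - s^2 and
   Pr[T_a = 1, T_b = 0] = ((p + s)(q + s) + (p - s)(q - s)) / 2 = pq + s^2,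
   and s^2 = -rho p q. *)

Section JointRandomizedResponse.
Variable R : rcfType.
Implicit Types (p s r : R) (i : 'I_4).

Definition sign (b : bool) : R := if b then 1 else -1.

Definition truthful r i : bool := 0 < Cval R i + r.

Lemma truthful1 i : truthful 1 i = (i < 3)%N.
Proof.
case: i => [[|[|[|[|k]]]] hk] //=; rewrite /truthful /Cval /=.
all: by case: ltrP => h //; exfalso; lra.
Qed.

Lemma truthfulN1 i : truthful (-1) i = (i == 0 :> nat).
Proof.
case: i => [[|[|[|[|k]]]] hk] //=; rewrite /truthful /Cval /=.
all: by case: ltrP => h //; exfalso; lra.
Qed.

Lemma sum_Cprob p s : \sum_i Cprob p s i = 1.
Proof. rewrite !big_ord_recl big_ord0 /Cprob /=; ring. Qed.

Lemma sum_Cprob_compl p s (P : pred 'I_4) :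
  \sum_(i | ~~ P i) Cprob p s i = 1 - \sum_(i | P i) Cprob p s i.
Proof. by rewrite -(sum_Cprob p s) (bigID P predT) /= addrC addrK. Qed.

Lemma sum_Cprob_truthful1 p s :
  \sum_(i | truthful 1 i) Cprob p s i = p + s.
Proof.
rewrite big_mkcond !big_ord_recl big_ord0 !truthful1 /Cprob /=; ring.
Qed.

Lemma sum_Cprob_truthfulN1 p s :
  \sum_(i | truthful (-1) i) Cprob p s i = p - s.
Proof.
rewrite big_mkcond !big_ord_recl big_ord0 !truthfulN1 /Cprob /=; ring.
Qed.

Lemma Prob_split_sign p s (A B : bool -> pred 'I_4) :
  Prob p s [pred w : Omega | A w.1.1 w.1.2 && B w.1.1 w.2] =
  1 / 2 * \sum_(b : bool)
    (\sum_(i | A b i) Cprob p s i) * (\sum_(j | B b j) Cprob p s j).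
Proof.
transitivity (\sum_b \sum_(i | A b i) \sum_(j | B b j) mass p s (b, i, j)).
  by rewrite pair_big_dep pair_big_dep /=.
rewrite mulr_sumr; apply: eq_bigr => b _.
rewrite big_distrl mulr_sumr /=; apply: eq_bigr => i _.
rewrite big_distrr mulr_sumr /=; apply: eq_bigr => j _.
by rewrite /mass mulrA.
Qed.

End JointRandomizedResponse.

Theorem theorem5 (R : rcfType) (p rho : R) :
  1 / 2 < p -> p <= 1 -> 1 - 1 / p <= rho -> rho <= 0 ->
  let q := 1 - p in
  let s := Num.sqrt (- rho * p * q) in
  [/\ Prob p s [pred w : Omega | Ta (R:=R) w && Tb (R:=R) w] = p ^+ 2 + rho * p * q,
      Prob p s [pred w : Omega | Ta (R:=R) w && ~~ Tb (R:=R) w] = (1 - rho) * p * q,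
      Prob p s [pred w : Omega | ~~ Ta (R:=R) w && Tb (R:=R) w] = (1 - rho) * p * q &
      Prob p s [pred w : Omega | ~~ Ta (R:=R) w && ~~ Tb (R:=R) w] = q ^+ 2 + rho * p * q].
Proof.
(* The bound [1 - 1/p <= rho] only makes [q - s] a probability; the
   identities themselves are algebraic. *)
move=> hp_half hp_le1 _ hrho_le0 q s.
have s_sqr : s ^+ 2 = - rho * p * q.
  rewrite sqr_sqrtr // -mulrA mulr_ge0 ?oppr_ge0 // mulr_ge0 /q; lra.
set TA := fun b => truthful (sign R b).
set TB := fun b => truthful (- sign R b).
rewrite (Prob_split_sign p s TA TB) (Prob_split_sign p s TA (fun b => predC (TB b))).
rewrite (Prob_split_sign p s (fun b => predC (TA b)) TB).
rewrite (Prob_split_sign p s (fun b => predC (TA b)) (fun b => predC (TB b))).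
rewrite !big_bool /TA /TB /= opprK !sum_Cprob_compl.
rewrite sum_Cprob_truthful1 sum_Cprob_truthfulN1.
have rho_pq : rho * p * q = - s ^+ 2 by rewrite s_sqr; ring.
have one_rho_pq : (1 - rho) * p * q = p * q + s ^+ 2.
  by rewrite !mulrBl mul1r rho_pq opprK.
by rewrite one_rho_pq rho_pq /q; split; field.
Qed.
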